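(* Let $1\le m\le n$, $\boldsymbol{\theta}^*\in\mathbb{R}^{m+n-1}$ and $X\sim\mathbb{P}_{\boldsymbol{\theta}^*}$. Let $V$ be the Fisher information matrix and $S$ the matrix defined below, both evaluated at $\boldsymbol{\theta}^*$, let $R=V^{-1}-S$ and $U=\mathrm{Cov}[R\{\mathbf{g}-\mathbb{E}\mathbf{g}\}]$. Then \[ \|U\|\le\|V^{-1}-S\|+\frac{3(1+e^{2\|\boldsymbol{\theta}^*\|_\infty})^4}{4mn\,e^{4\|\boldsymbol{\theta}^*\|_\infty}}, \] where $\|A\|:=\max_{i,j}|a_{i,j}|$.
   Context: Affiliation network model: $X=(x_{i,j})$ is an $m\times n$ $\{0,1\}$-matrix; parameters $\alpha_1,\dots,\alpha_m,\beta_1,\dots,\beta_n$ with $\beta_n=0$, $\boldsymbol{\theta}=(\alpha_1,\dots,\alpha_m,\beta_1,\dots,\beta_{n-1})^\top$; under $\mathbb{P}_{\boldsymbol{\theta}}$ the $x_{i,j}$ are independent Bernoulli with success probability $e^{\alpha_i+\beta_j}/(1+e^{\alpha_i+\beta_j})$. $d_i=\sum_j x_{i,j}$, $b_j=\sum_i x_{i,j}$, $\mathbf{g}=(d_1,\dots,d_m,b_1,\dots,b_{n-1})^\top$. Write $u_{i,j}=e^{\alpha_i+\beta_j}/(1+e^{\alpha_i+\beta_j})^2$. The Fisher information $V=(v_{k,l})$ is the $(m+n-1)\times(m+n-1)$ symmetric matrix with $v_{i,i}=\sum_{j=1}^n u_{i,j}$ ($i\le m$), $v_{m+j,m+j}=\sum_{i=1}^m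 u_{i,j}$ ($j\le n-1$), $v_{i,m+j}=v_{m+j,i}=u_{i,j}$ ($i\le m$, $j\le n-1$), and all other entries zero; also set $v_{m+n,m+n}=\sum_{i=1}^m u_{i,n}$. $S=(s_{k,l})$: $s_{k,l}=\frac{\delta_{k,l}}{v_{k,k}}+\frac{1}{v_{m+n,m+n}}$ if $k,l\in\{1,\dots,m\}$ or $k,l\in\{m+1,\dots,m+n-1\}$, and $s_{k,l}=-\frac{1}{v_{m+n,m+n}}$ otherwise. *)

From HB Require Import structures.
From mathcomp Require Import all_boot all_order all_algebra.
From mathcomp Require Import reals exp sequences.
Set Implicit Arguments. Unset Strict Implicit. Unset Printing Implicit Defensive.
Import Order.TTheory GRing.Theory Num.Theory.
Local Open Scope ring_scope.

Section Affiliation.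
Variable R : realType.
Variables m n : nat.
(* theta = (alpha_1..alpha_m, beta_1..beta_{n-1}) ; dimension m + (n-1) *)
Variable theta : 'cV[R]_(m + n.-1).

(* theta_k for a 0-based nat index k (0 outside the range) *)
Definition thetaN (k : nat) : R :=
  if insub k is Some k' then theta k' 0 else 0.

Definition alphaN (i : nat) : R := thetaN i.
(* beta_j, j = 0..n-1 (0-based); beta_{n-1} = 0 (the paper's beta_n = 0) *)
Definition betaN (j : nat) : R := if (j < n.-1)%N then thetaN (m + j) else 0.

Definition pN (i j : nat) : R :=
  expR (alphaN i + betaN j) / (1 + expR (alphaN i + betaN j)).

Definition uN (i j : nat) : R :=
  expR (alphaN i + betaN j) / (1 + expR (alphaN i + betaN j)) ^+ 2.

(* Fisher information V : rows/cols k < m are alpha's, m + j are beta_j *)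
Definition fisherV : 'M[R]_(m + n.-1) :=
  \matrix_(k, l)
    match split k, split l with
    | inl i, inl i' => if i == i' then \sum_(j < n) uN i j else 0
    | inr j, inr j' => if j == j' then \sum_(i < m) uN i j else 0
    | inl i, inr j => uN i j
    | inr j, inl i => uN i j
    end.

Definition vlast : R := \sum_(i < m) uN i n.-1.

Definition matS : 'M[R]_(m + n.-1) :=
  \matrix_(k, l)
    match split k, split l with
    | inl i, inl i' => (i == i')%:R / fisherV k k + 1 / vlast
    | inr j, inr j' => (j == j')%:R / fisherV k k + 1 / vlast
    | _, _ => - (1 / vlast)
    end.

Definition probX (X : 'M[bool]_(m, n)) : R :=
  \prod_(i < m) \prod_(j < n) (if X i j then pN i j else 1 - pN i j).

Definition Exp (p q : nat) (F : 'M[bool]_(m, n) -> 'M[R]_(p, q)) : 'M[R]_(p, q) :=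
  \sum_(X : 'M[bool]_(m, n)) probX X *: F X.

Definition gvec (X : 'M[bool]_(m, n)) : 'cV[R]_(m + n.-1) :=
  \col_k match split k with
         | inl i => \sum_(j < n) (X i j)%:R
         | inr j => \sum_(i < m) (X i (widen_ord (leq_pred n) j))%:R
         end.

Definition Cov (p : nat) (Y : 'M[bool]_(m, n) -> 'cV[R]_p) : 'M[R]_p :=
  Exp (fun X => (Y X - Exp Y) *m (Y X - Exp Y)^T).

End Affiliation.

Definition maxnorm (R : realType) (p q : nat) (A : 'M[R]_(p, q)) : R :=
  \big[Num.max/0]_(i < p) \big[Num.max/0]_(j < q) `|A i j|.

(* Since R(g - Eg) is centered, U = R V R^T, where V = Cov g is the Fisher
   information.  V is positive definite: its quadratic form is
   sum_{i,j} u_{i,j} (x_i + y_j)^2 with y_n = 0.  As V and S are symmetric, so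
   is R, and R V R = R + S (V S - I).  Computing S (V S - I) blockwise, every
   entry is a sum or difference of two ratios u_{i,j} / (v_{i,i} v_{m+j,m+j}),
   and e^{2t}/(1+e^{2t})^2 <= u_{i,j} <= 1/4 with t = ||theta||_oo bounds each
   ratio by (1+e^{2t})^4 / (4mn e^{4t}), so the entries of S (V S - I) are at
   most twice that bound. *)

From HB Require Import structures.
From mathcomp Require Import all_boot all_order all_algebra.
From mathcomp Require Import reals exp sequences.
From mathcomp Require Import ring lra.
Import Order.TTheory GRing.Theory Num.Theory.
Set Implicit Arguments. Unset Strict Implicit. Unset Printing Implicit Defensive.
Local Open Scope ring_scope.

Lemma split_lshift m n (i : 'I_m) : split (lshift n i) = inl i.
Proof. exact: (unsplitK (inl i : 'I_m + 'I_n)). Qed.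

Lemma split_rshift m n (j : 'I_n) : split (rshift m j) = inr j.
Proof. exact: (unsplitK (inr j : 'I_m + 'I_n)). Qed.

Lemma sum_delta_mul (R : nzSemiRingType) (I : finType) (i : I) (F : I -> R) :
  \sum_r (i == r)%:R * F r = F i.
Proof.
rewrite (bigD1 i) //= eqxx mul1r big1 ?addr0 // => r.
by rewrite eq_sym => /negbTE ->; rewrite mul0r.
Qed.

Lemma sum_diag_const_mul (R : fieldType) (I : finType) (i : I) (F c : I -> R) (d : R) :
  \sum_r ((i == r)%:R / c r + d) * F r = F i / c i + d * \sum_r F r.
Proof.
under eq_bigr do rewrite mulrDl -mulrA.
by rewrite big_split /= sum_delta_mul mulr_sumr mulrC.
Qed.

Lemma prod_if_eq (R : comNzRingType) (I : finType) (a : I) (F : I -> R) :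
  \prod_p (if p == a then F p else 1) = F a.
Proof. by rewrite -big_mkcond big_pred1_eq. Qed.

Lemma sum_boolmx_prod (R : comNzRingType) m n (F : 'I_m * 'I_n -> bool -> R) :
  \sum_(X : 'M[bool]_(m, n)) \prod_p F p (X p.1 p.2) = \prod_p (F p true + F p false).
Proof.
under [RHS]eq_bigr do rewrite -big_bool.
rewrite bigA_distr_bigA /=.
rewrite (reindex (fun f : {ffun 'I_m * 'I_n -> bool} => \matrix_(i, j) f (i, j))) /=.
  by apply: eq_bigr => f _; apply: eq_bigr => -[i j] _; rewrite mxE.
exists (fun X : 'M[bool]_(m, n) => [ffun p => X p.1 p.2]) => [f _ | X _].
  by apply/ffunP => -[i j]; rewrite ffunE mxE.
by apply/matrixP => i j; rewrite !mxE ffunE.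
Qed.

Lemma mulmx_inv_sub_tr (R : comUnitRingType) p (V S : 'M[R]_p) :
  V \in unitmx -> V^T = V -> S^T = S ->
  (invmx V - S) *m V *m (invmx V - S)^T = (invmx V - S) + S *m (V *m S - 1%:M).
Proof.
move=> V_unit V_sym S_sym; rewrite linearB /= trmx_inv V_sym S_sym.
rewrite mulmxBl mulVmx // mulmxBl mul1mx -[S *m V *m _]mulmxA.
by rewrite mulmxBr mulmxV // -[1%:M - _]opprB mulmxN opprK.
Qed.

Lemma le_maxnorm (R : realType) p q (A : 'M[R]_(p, q)) i j : `|A i j| <= maxnorm A.
Proof.
apply: le_trans (le_bigmax 0 (fun i => \big[Num.max/0]_(j < q) `|A i j|) i).
exact: (le_bigmax 0 (fun j => `|A i j|) j).
Qed.

Lemma maxnorm_ge0 (R : realType) p q (A : 'M[R]_(p, q)) : 0 <= maxnorm A.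
Proof. exact: bigmax_ge_id. Qed.

Lemma maxnorm_le (R : realType) p q (A : 'M[R]_(p, q)) c :
  0 <= c -> (forall i j, `|A i j| <= c) -> maxnorm A <= c.
Proof. by move=> c_ge0 leAc; do 2!apply: bigmax_le => // ? _. Qed.

Definition bernoulli_mean (R : nzRingType) (p : R) (f : bool -> R) : R :=
  p * f true + (1 - p) * f false.

Lemma bernoulli_mean1 (R : nzRingType) (p : R) : bernoulli_mean p (fun=> 1) = 1.
Proof. by rewrite /bernoulli_mean !mulr1 addrC subrK. Qed.

Lemma bernoulli_mean_centered (R : comNzRingType) (p : R) :
  bernoulli_mean p (fun x => x%:R - p) = 0.
Proof. by rewrite /bernoulli_mean /=; ring. Qed.

Section Bernoulli.
Variables (R : realType) (m n : nat) (th : 'cV[R]_(m + n.-1)).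

Local Notation p a := (pN th (a : 'I_m * 'I_n).1 a.2).

Lemma probXE X :
  probX th X = \prod_(a : 'I_m * 'I_n) (if X a.1 a.2 then p a else 1 - p a).
Proof. by rewrite /probX pair_big. Qed.

Lemma sum_probX_prod (h : 'I_m * 'I_n -> bool -> R) :
  \sum_X probX th X * \prod_a h a (X a.1 a.2) = \prod_(a : 'I_m * 'I_n) bernoulli_mean (p a) (h a).
Proof.
pose F a (x : bool) := (if x then p a else 1 - p a) * h a x.
rewrite [RHS](_ : _ = \prod_a (F a true + F a false)) // -sum_boolmx_prod.
by apply: eq_bigr => X _; rewrite probXE -big_split.
Qed.

Lemma sum_probX1 : \sum_X probX th X = 1.
Proof.
transitivity (\sum_X probX th X * \prod_(a : 'I_m * 'I_n) (fun=> 1) (X a.1 a.2)).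
  by apply: eq_bigr => X _; rewrite big1 ?mulr1.
by rewrite (sum_probX_prod (fun _ _ => 1)); apply: big1 => a _; apply: bernoulli_mean1.
Qed.

Lemma sum_probX_cell a (f : bool -> R) :
  \sum_X probX th X * f (X a.1 a.2) = bernoulli_mean (p a) f.
Proof.
transitivity (\sum_X probX th X * \prod_b (if b == a then f (X b.1 b.2) else 1)).
  by apply: eq_bigr => X _; rewrite prod_if_eq.
rewrite (sum_probX_prod (fun b x => if b == a then f x else 1)).
rewrite -[RHS](prod_if_eq a (fun b => bernoulli_mean (p b) f)).
by apply: eq_bigr => b _; case: eqP => // _; rewrite bernoulli_mean1.
Qed.

Lemma sum_probX_cells a b (f g : bool -> R) : a != b ->
  \sum_X probX th X * (f (X a.1 a.2) * g (X b.1 b.2))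
  = bernoulli_mean (p a) f * bernoulli_mean (p b) g.
Proof.
move=> neq_ab; pose h c x := (if c == a then f x else 1) * (if c == b then g x else 1).
transitivity (\sum_X probX th X * \prod_c h c (X c.1 c.2)).
  by apply: eq_bigr => X _; rewrite big_split /= !prod_if_eq.
rewrite (sum_probX_prod h) -(prod_if_eq a (fun c => bernoulli_mean (p c) f)).
rewrite -(prod_if_eq b (fun c => bernoulli_mean (p c) g)) -big_split /=.
apply: eq_bigr => c _; rewrite /h /bernoulli_mean.
case: (eqVneq c a) => [-> | _]; first by rewrite (negbTE neq_ab); ring.
by case: eqP => _; ring.
Qed.

Definition centered (X : 'M[bool]_(m, n)) (a : 'I_m * 'I_n) : R := (X a.1 a.2)%:R - p a.

Lemma sum_probX_indicator a : \sum_X probX th X * (X a.1 a.2)%:R = p a.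
Proof. by rewrite (sum_probX_cell a (fun x => x%:R)) /bernoulli_mean /=; ring. Qed.

Lemma pN_mul_subr a : p a * (1 - p a) = uN th a.1 a.2.
Proof.
rewrite /pN /uN; set e := expR _.
by field; rewrite gt_eqF // ltr_pwDr ?expR_gt0.
Qed.

Lemma sum_probX_centered2 (a b : 'I_m * 'I_n) :
  \sum_X probX th X * (centered X a * centered X b) = (a == b)%:R * uN th a.1 a.2.
Proof.
case: (eqVneq a b) => [<- | neq_ab]; last first.
  by rewrite (sum_probX_cells (fun x => x%:R - p a) (fun x => x%:R - p b) neq_ab)
    bernoulli_mean_centered !mul0r.
rewrite (sum_probX_cell a (fun x => (x%:R - p a) * (x%:R - p a))) mul1r -pN_mul_subr.
by rewrite /bernoulli_mean /=; ring.
Qed.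

End Bernoulli.

Section Expectation.
Variables (R : realType) (m n : nat) (th : 'cV[R]_(m + n.-1)).

Lemma Exp_entry p q (F : 'M[bool]_(m, n) -> 'M[R]_(p, q)) k l :
  Exp th F k l = \sum_X probX th X * F X k l.
Proof. by rewrite /Exp summxE; apply: eq_bigr => X _; rewrite mxE. Qed.

Lemma eq_Exp p q (F G : 'M[bool]_(m, n) -> 'M[R]_(p, q)) : F =1 G -> Exp th F = Exp th G.
Proof. by move=> eqFG; apply: eq_bigr => X _; rewrite eqFG. Qed.

Lemma Exp_mull p q r (A : 'M[R]_(p, q)) (F : 'M[bool]_(m, n) -> 'M[R]_(q, r)) :
  Exp th (fun X => A *m F X) = A *m Exp th F.
Proof. by rewrite /Exp mulmx_sumr; apply: eq_bigr => X _; rewrite scalemxAr. Qed.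

Lemma Exp_mulr p q r (B : 'M[R]_(q, r)) (F : 'M[bool]_(m, n) -> 'M[R]_(p, q)) :
  Exp th (fun X => F X *m B) = Exp th F *m B.
Proof. by rewrite /Exp mulmx_suml; apply: eq_bigr => X _; rewrite scalemxAl. Qed.

Lemma Exp_subr p q (F : 'M[bool]_(m, n) -> 'M[R]_(p, q)) C :
  Exp th (fun X => F X - C) = Exp th F - C.
Proof.
apply/matrixP => k l; rewrite !mxE !Exp_entry.
under eq_bigr do rewrite !mxE mulrBr.
by rewrite sumrB -mulr_suml sum_probX1 mul1r.
Qed.

Lemma Cov_mulmx_centered p q (A : 'M[R]_(p, q)) (Y : 'M[bool]_(m, n) -> 'cV[R]_q) :
  Cov th (fun X => A *m (Y X - Exp th Y)) = A *m Cov th Y *m A^T.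
Proof.
rewrite /Cov Exp_mull Exp_subr subrr mulmx0 -Exp_mull -Exp_mulr.
by apply: eq_Exp => X; rewrite subr0 trmx_mul !mulmxA.
Qed.

End Expectation.

Definition incid m n (k : 'I_(m + n.-1)) (a : 'I_m * 'I_n) : bool :=
  match split k with
  | inl i => a.1 == i
  | inr j => a.2 == widen_ord (leq_pred n) j
  end.

Lemma sum_incid (R : nzRingType) m n k (f : 'I_m * 'I_n -> R) :
  \sum_a (incid k a)%:R * f a =
  match split k with
  | inl i => \sum_(j < n) f (i, j)
  | inr j => \sum_(i < m) f (i, widen_ord (leq_pred n) j)
  end.
Proof.
transitivity (\sum_i \sum_j (incid k (i, j))%:R * f (i, j)).
  by rewrite pair_big; apply: eq_bigr => -[i j].
rewrite /incid /=; case: (split k) => [i | j] /=.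
  rewrite (bigD1 i) //= [X in _ + X]big1 ?addr0; last first.
    by move=> i' /negbTE ->; apply: big1 => j _; rewrite mul0r.
  by apply: eq_bigr => j _; rewrite eqxx mul1r.
apply: eq_bigr => i _; rewrite (bigD1 (widen_ord (leq_pred n) j)) //= eqxx mul1r.
by rewrite big1 ?addr0 // => j' /negbTE ->; rewrite mul0r.
Qed.

Section DegreeCovariance.
Variables (R : realType) (m n : nat) (th : 'cV[R]_(m + n.-1)).

Lemma gvec_incid (X : 'M[bool]_(m, n)) k : gvec R X k 0 = \sum_a (incid k a)%:R * (X a.1 a.2)%:R.
Proof. by rewrite sum_incid mxE. Qed.

Lemma gvec_centered (X : 'M[bool]_(m, n)) k :
  (gvec R X - Exp th (@gvec R m n)) k 0 = \sum_a (incid k a)%:R * centered th X a.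
Proof.
rewrite mxE gvec_incid [in X in _ + X]mxE Exp_entry.
under [X in _ - X]eq_bigr do rewrite gvec_incid mulr_sumr.
rewrite exchange_big -sumrB; apply: eq_bigr => a _ /=.
under eq_bigr do rewrite mulrCA.
by rewrite -mulr_sumr sum_probX_indicator -mulrBr.
Qed.

Lemma sum_probX_centered_bilinear (c c' : 'I_m * 'I_n -> R) :
  \sum_X probX th X * ((\sum_a c a * centered th X a) * (\sum_b c' b * centered th X b))
  = \sum_a c a * c' a * uN th a.1 a.2.
Proof.
transitivity (\sum_a \sum_b c a * c' b *
  \sum_X probX th X * (centered th X a * centered th X b)).
  under eq_bigr do rewrite mulr_suml mulr_sumr.
  rewrite exchange_big; apply: eq_bigr => a _ /=.
  under eq_bigr do rewrite mulr_sumr mulr_sumr.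
  rewrite exchange_big; apply: eq_bigr => b _ /=.
  by rewrite mulr_sumr; apply: eq_bigr => X _; ring.
apply: eq_bigr => a _; rewrite (bigD1 a) //= sum_probX_centered2 eqxx mul1r mulrA.
rewrite big1 ?addr0 // => b neq_ba.
by rewrite sum_probX_centered2 eq_sym (negbTE neq_ba) !mul0r mulr0.
Qed.

Lemma fisherV_incid k l :
  fisherV th k l = \sum_a (incid k a)%:R * (incid l a)%:R * uN th a.1 a.2.
Proof.
under eq_bigr do rewrite -mulrA.
rewrite sum_incid mxE /incid.
case: (split k) => [i | j]; case: (split l) => [i' | j'] /=.
- case: eqP => _ /=; last by rewrite big1 // => j _; rewrite mulr0n mul0r.
  by apply: eq_bigr => j _; rewrite mul1r.
- rewrite (bigD1 (widen_ord (leq_pred n) j')) //= eqxx mul1r big1 ?addr0 //.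
  by move=> j /negbTE ->; rewrite mul0r.
- rewrite (bigD1 i') //= eqxx mul1r big1 ?addr0 //.
  by move=> i /negbTE ->; rewrite mul0r.
- have -> : (widen_ord (leq_pred n) j == widen_ord (leq_pred n) j') = (j == j') by [].
  case: eqP => _ /=; last by rewrite big1 // => i _; rewrite mulr0n mul0r.
  by apply: eq_bigr => i _; rewrite mul1r.
Qed.

Lemma Cov_gvec : Cov th (@gvec R m n) = fisherV th.
Proof.
apply/matrixP => k l; rewrite Exp_entry fisherV_incid.
under eq_bigr do rewrite mxE big_ord1 [_^T _ _]mxE !gvec_centered.
exact: sum_probX_centered_bilinear.
Qed.

Lemma fisherV_tr : (fisherV th)^T = fisherV th.
Proof.
apply/matrixP => k l; rewrite mxE !fisherV_incid.
by apply: eq_bigr => a _; rewrite [_%:R * _%:R]mulrC.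
Qed.

Lemma fisherV_quad (v : 'rV[R]_(m + n.-1)) :
  (v *m fisherV th *m v^T) 0 0
  = \sum_(a : 'I_m * 'I_n) uN th a.1 a.2 * (\sum_k v 0 k * (incid k a)%:R) ^+ 2.
Proof.
rewrite mxE; under eq_bigr do rewrite mxE [v^T _ _]mxE mulr_suml.
under eq_bigr do under eq_bigr do rewrite fisherV_incid !mulr_sumr mulr_suml.
transitivity (\sum_k \sum_(a : 'I_m * 'I_n) \sum_l
    uN th a.1 a.2 * (v 0 k * (incid k a)%:R) * (v 0 l * (incid l a)%:R)).
  apply: eq_bigr => k _; rewrite exchange_big; apply: eq_bigr => a _.
  by apply: eq_bigr => l _; ring.
rewrite exchange_big; apply: eq_bigr => a _ /=.
rewrite expr2 mulr_suml mulr_sumr; apply: eq_bigr => k _.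
by rewrite !mulr_sumr; apply: eq_bigr => l _; ring.
Qed.

End DegreeCovariance.

Definition logistic_density (R : realType) (x : R) : R := expR x / (1 + expR x) ^+ 2.

Lemma logistic_density_gt0 (R : realType) (x : R) : 0 < logistic_density x.
Proof. by rewrite divr_gt0 ?expR_gt0 // exprn_gt0 // ltr_pwDr ?expR_gt0. Qed.

Lemma logistic_density_le (R : realType) (x : R) : logistic_density x <= 1 / 4.
Proof.
have ex_gt0 := expR_gt0 x; rewrite /logistic_density -subr_ge0.
have -> : 1 / 4 - expR x / (1 + expR x) ^+ 2 = (1 - expR x) ^+ 2 / (4 * (1 + expR x) ^+ 2).
  by field; rewrite gt_eqF // ltr_wpDr ?ltW.
by rewrite divr_ge0 ?sqr_ge0 // mulr_ge0 ?sqr_ge0.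
Qed.

Lemma logistic_density_ge_norm (R : realType) (x c : R) :
  `|x| <= c -> logistic_density c <= logistic_density x.
Proof.
rewrite ler_norml => /andP [lex xle]; rewrite /logistic_density -subr_ge0.
have ex_gt0 := expR_gt0 x; have ec_gt0 := expR_gt0 c.
have ex_le : expR x <= expR c by rewrite ler_expR.
have ecx_ge1 : 1 <= expR c * expR x by rewrite -expRD -expR0 ler_expR; lra.
have -> : expR x / (1 + expR x) ^+ 2 - expR c / (1 + expR c) ^+ 2
    = (expR c - expR x) * (expR c * expR x - 1) / ((1 + expR x) ^+ 2 * (1 + expR c) ^+ 2).
  by field; rewrite !gt_eqF ?ltr_wpDr ?ltW.
apply: divr_ge0; last by rewrite mulr_ge0 ?sqr_ge0.
by rewrite mulr_ge0 // subr_ge0.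
Qed.

Lemma normr_alpha_beta_le (R : realType) m n (th : 'cV[R]_(m + n.-1)) i j :
  `|alphaN th i + betaN th j| <= 2 * maxnorm th.
Proof.
have thetaN_le k : `|thetaN th k| <= maxnorm th.
  rewrite /thetaN; case: insubP => [k' _ _ | _]; first exact: le_maxnorm.
  by rewrite normr0 maxnorm_ge0.
apply: le_trans (ler_normD _ _) _; rewrite mulr2n mulrDl mul1r lerD //.
by rewrite /betaN; case: ifP => _; rewrite ?normr0 ?maxnorm_ge0.
Qed.

Lemma uN_gt0 (R : realType) m n (th : 'cV[R]_(m + n.-1)) i j : 0 < uN th i j.
Proof. exact: logistic_density_gt0. Qed.

Lemma normr_addr_le2 (R : realDomainType) (x y c : R) :
  0 <= x <= c -> 0 <= y <= c -> `|x + y| <= 2 * c.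
Proof. by move=> /andP[? ?] /andP[? ?]; rewrite ler_norml; apply/andP; split; lra. Qed.

Lemma normr_subr_le2 (R : realDomainType) (x y c : R) :
  0 <= x <= c -> 0 <= y <= c -> `|x - y| <= 2 * c.
Proof. by move=> /andP[? ?] /andP[? ?]; rewrite ler_norml; apply/andP; split; lra. Qed.

(* Here the paper's n is n.+1: columns are indexed by 'I_n.+1, the last one
   (nat index n, with beta_n = 0) being the one eliminated from theta. *)
Section FisherBlocks.
Variables (R : realType) (m n : nat) (th : 'cV[R]_(m + n.+1.-1)).
Hypothesis m_gt0 : (0 < m)%N.

Definition urow (i : nat) : R := \sum_(j < n.+1) uN th i j.
Definition ucol (j : nat) : R := \sum_(i < m) uN th i j.

Lemma urowE i : urow i = \sum_(j < n) uN th i j + uN th i n.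
Proof. by rewrite /urow big_ord_recr. Qed.

Lemma urow_gt0 i : 0 < urow i.
Proof. by rewrite urowE ltr_wpDl ?uN_gt0 // sumr_ge0 // => j _; rewrite ltW ?uN_gt0. Qed.

Lemma ucol_gt0 j : 0 < ucol j.
Proof.
rewrite /ucol (bigD1 (Ordinal m_gt0)) //= ltr_pwDl ?uN_gt0 //.
by rewrite sumr_ge0 // => i _; rewrite ltW ?uN_gt0.
Qed.

Lemma fisherV_ll (i i' : 'I_m) :
  fisherV th (lshift _ i) (lshift _ i') = (i == i')%:R * urow i.
Proof. by rewrite mxE !split_lshift; case: eqP; rewrite ?mul1r ?mul0r. Qed.

Lemma fisherV_lr (i : 'I_m) (j : 'I_n) : fisherV th (lshift _ i) (rshift _ j) = uN th i j.
Proof. by rewrite mxE split_lshift split_rshift. Qed.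

Lemma fisherV_rl (i : 'I_m) (j : 'I_n) : fisherV th (rshift _ j) (lshift _ i) = uN th i j.
Proof. by rewrite mxE split_lshift split_rshift. Qed.

Lemma fisherV_rr (j j' : 'I_n) :
  fisherV th (rshift _ j) (rshift _ j') = (j == j')%:R * ucol j.
Proof. by rewrite mxE !split_rshift; case: eqP; rewrite ?mul1r ?mul0r. Qed.

Lemma matS_ll (i i' : 'I_m) :
  matS th (lshift _ i) (lshift _ i') = (i == i')%:R / urow i + 1 / ucol n.
Proof. by rewrite mxE !split_lshift fisherV_ll eqxx mulr1n mul1r. Qed.

Lemma matS_lr (i : 'I_m) (j : 'I_n) : matS th (lshift _ i) (rshift _ j) = - (1 / ucol n).
Proof. by rewrite mxE split_lshift split_rshift. Qed.

Lemma matS_rl (i : 'I_m) (j : 'I_n) : matS th (rshift _ j) (lshift _ i) = - (1 / ucol n).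
Proof. by rewrite mxE split_lshift split_rshift. Qed.

Lemma matS_rr (j j' : 'I_n) :
  matS th (rshift _ j) (rshift _ j') = (j == j')%:R / ucol j + 1 / ucol n.
Proof. by rewrite mxE !split_rshift fisherV_rr eqxx mulr1n mul1r. Qed.

Lemma matS_tr : (matS th)^T = matS th.
Proof.
apply/matrixP => k l; rewrite mxE.
case: (split_ordP k) => i ->; case: (split_ordP l) => j ->.
- by rewrite !matS_ll eq_sym; case: eqP => [-> | _] //; rewrite !mul0r.
- by rewrite matS_lr matS_rl.
- by rewrite matS_lr matS_rl.
- by rewrite !matS_rr eq_sym; case: eqP => [-> | _] //; rewrite !mul0r.
Qed.

Lemma incid_combination (v : 'rV[R]_(m + n.+1.-1)) (i : 'I_m) (j : 'I_n.+1) :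
  \sum_k v 0 k * (incid k (i, j))%:R
  = v 0 (lshift _ i) + \sum_(j' < n) v 0 (rshift _ j') * (j == widen_ord (leq_pred n.+1) j')%:R.
Proof.
rewrite big_split_ord /=; congr (_ + _).
  rewrite (bigD1 i) //= /incid split_lshift /= eqxx mulr1 big1 ?addr0 // => i' /negbTE neq_i'i.
  by rewrite split_lshift /= eq_sym neq_i'i mulr0.
by apply: eq_bigr => j' _; rewrite /incid split_rshift.
Qed.

Lemma fisherV_unit : fisherV th \in unitmx.
Proof.
rewrite unitmxE unitfE; apply/negP => /det0P [v v_neq0 vV0].
pose s a := \sum_k v 0 k * (incid k a)%:R.
have s0 a : s a = 0.
  have quad0 : \sum_(b : 'I_m * 'I_n.+1) uN th b.1 b.2 * s b ^+ 2 = 0.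
    by rewrite -fisherV_quad vV0 mul0mx mxE.
  have nonneg (b : 'I_m * 'I_n.+1) : true -> 0 <= uN th b.1 b.2 * s b ^+ 2.
    by rewrite mulr_ge0 ?sqr_ge0 ?ltW ?uN_gt0.
  have /eqP := psumr_eq0P nonneg quad0 (i := a) isT.
  by rewrite mulf_eq0 (gt_eqF (uN_gt0 _ _ _)) sqrf_eq0 => /eqP.
have x0 i : v 0 (lshift _ i) = 0.
  have := s0 (i, ord_max); rewrite /s incid_combination big1 ?addr0 // => j' _.
  by rewrite -val_eqE /= gtn_eqF ?mulr0.
have y0 j : v 0 (rshift _ j) = 0.
  have := s0 (Ordinal m_gt0, widen_ord (leq_pred n.+1) j).
  rewrite /s incid_combination x0 add0r (bigD1 j) //= eqxx mulr1 big1 ?addr0 // => j' neq_j'j.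
  by rewrite -val_eqE /= eq_sym (inj_eq val_inj) (negbTE neq_j'j) mulr0.
move/eqP: v_neq0; apply; apply/matrixP => a k; rewrite ord1 mxE.
by case: (split_ordP k) => [i -> | j ->]; [exact: x0 | exact: y0].
Qed.

Definition VS_defect := fisherV th *m matS th - 1%:M.

Let ucol_neq0 j : ucol j != 0. Proof. by rewrite gt_eqF ?ucol_gt0. Qed.
Let urow_neq0 i : urow i != 0. Proof. by rewrite gt_eqF ?urow_gt0. Qed.

Lemma VS_defect_ll (i i' : 'I_m) :
  VS_defect (lshift _ i) (lshift _ i') = uN th i n / ucol n.
Proof.
rewrite /VS_defect !mxE big_split_ord /=.
under eq_bigr do rewrite fisherV_ll matS_ll -mulrA.
under [X in _ + X - _]eq_bigr do rewrite fisherV_lr matS_rl.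
rewrite sum_delta_mul -mulr_suml eq_shift.
rewrite -(addrK (uN th i n) (\sum_(j < n) _)) -urowE.
by case: (i == i'); rewrite ?mulr1n ?mulr0n; field; rewrite urow_neq0 ucol_neq0.
Qed.

Lemma VS_defect_lr (i : 'I_m) (j : 'I_n) :
  VS_defect (lshift _ i) (rshift _ j) = uN th i j / ucol j - uN th i n / ucol n.
Proof.
rewrite /VS_defect !mxE big_split_ord /= eq_lrshift.
under eq_bigr do rewrite fisherV_ll matS_lr -mulrA.
under [X in _ + X - _]eq_bigr do rewrite fisherV_lr matS_rr mulrC eq_sym.
rewrite sum_delta_mul (sum_diag_const_mul j (fun r : 'I_n => uN th i r) (fun r : 'I_n => ucol r)).
rewrite -(addrK (uN th i n) (\sum_(r < n) _)) -urowE.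
by rewrite mulr0n subr0; field; rewrite ucol_neq0 ucol_neq0.
Qed.

Lemma VS_defect_rl (i : 'I_m) (j : 'I_n) :
  VS_defect (rshift _ j) (lshift _ i) = uN th i j / urow i.
Proof.
rewrite /VS_defect !mxE big_split_ord /= eq_sym eq_lrshift.
under eq_bigr do rewrite fisherV_rl matS_ll mulrC eq_sym.
under [X in _ + X - _]eq_bigr do rewrite fisherV_rr matS_rl -mulrA.
rewrite sum_delta_mul (sum_diag_const_mul i (fun r : 'I_m => uN th r j) (fun r : 'I_m => urow r)).
by rewrite -/(ucol j) mulr0n subr0; field; rewrite ucol_neq0 urow_neq0.
Qed.

Lemma VS_defect_rr (j j' : 'I_n) : VS_defect (rshift _ j) (rshift _ j') = 0.
Proof.
rewrite /VS_defect !mxE big_split_ord /= eq_shift.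
under eq_bigr do rewrite fisherV_rl matS_lr.
under [X in _ + X - _]eq_bigr do rewrite fisherV_rr matS_rr -mulrA.
rewrite sum_delta_mul -mulr_suml -/(ucol j).
by case: (j == j'); rewrite ?mulr1n ?mulr0n; field; rewrite ucol_neq0 ucol_neq0.
Qed.

Definition uratio (i j : nat) : R := uN th i j / (urow i * ucol j).

Lemma S_VS_defect_ll (i i' : 'I_m) :
  (matS th *m VS_defect) (lshift _ i) (lshift _ i') = uratio i n + uratio i' n.
Proof.
rewrite mxE big_split_ord /=.
under eq_bigr do rewrite matS_ll VS_defect_ll.
under [X in _ + X]eq_bigr do rewrite matS_lr VS_defect_rl.
rewrite (sum_diag_const_mul i (fun r : 'I_m => uN th r n / ucol n) (fun=> urow i)).
rewrite -mulr_sumr -!mulr_suml -/(ucol n).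
rewrite -(addrK (uN th i' n) (\sum_(r < n) _)) -urowE /uratio.
by field; rewrite urow_neq0 urow_neq0 ucol_neq0.
Qed.

Lemma S_VS_defect_lr (i : 'I_m) (j : 'I_n) :
  (matS th *m VS_defect) (lshift _ i) (rshift _ j) = uratio i j - uratio i n.
Proof.
rewrite mxE big_split_ord /=.
under eq_bigr do rewrite matS_ll VS_defect_lr.
under [X in _ + X]eq_bigr do rewrite matS_lr VS_defect_rr mulr0.
rewrite big1_eq addr0.
rewrite (sum_diag_const_mul i (fun r : 'I_m => uN th r j / ucol j - uN th r n / ucol n)
  (fun=> urow i)).
rewrite sumrB -!mulr_suml -/(ucol n) -/(ucol j) /uratio.
by field; rewrite urow_neq0 ucol_neq0 ucol_neq0.
Qed.

Lemma S_VS_defect_rl (i : 'I_m) (j : 'I_n) :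
  (matS th *m VS_defect) (rshift _ j) (lshift _ i) = uratio i j - uratio i n.
Proof.
rewrite mxE big_split_ord /=.
under eq_bigr do rewrite matS_rl VS_defect_ll.
under [X in _ + X]eq_bigr do rewrite matS_rr VS_defect_rl.
rewrite (sum_diag_const_mul j (fun r : 'I_n => uN th i r / urow i) (fun=> ucol j)).
rewrite -mulr_sumr -!mulr_suml -/(ucol n).
rewrite -(addrK (uN th i n) (\sum_(r < n) _)) -urowE /uratio.
by field; rewrite urow_neq0 ucol_neq0 ucol_neq0.
Qed.

Lemma S_VS_defect_rr (j j' : 'I_n) : (matS th *m VS_defect) (rshift _ j) (rshift _ j') = 0.
Proof.
rewrite mxE big_split_ord /=.
under eq_bigr do rewrite matS_rl VS_defect_lr.
under [X in _ + X]eq_bigr do rewrite matS_rr VS_defect_rr mulr0.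
rewrite big1_eq addr0 -mulr_sumr sumrB -!mulr_suml -/(ucol n) -/(ucol j').
by field; rewrite ucol_neq0 ucol_neq0.
Qed.

Local Notation t := (maxnorm th).
Local Notation q := (logistic_density (2 * t)).
Local Notation ubound := ((1 + expR (2 * t)) ^+ 4 / (4 * (m * n.+1)%:R * expR (4 * t))).

Lemma uN_ge i j : q <= uN th i j.
Proof. exact: logistic_density_ge_norm (normr_alpha_beta_le th i j). Qed.

Lemma urow_ge i : n.+1%:R * q <= urow i.
Proof.
by rewrite mulr_natl -[X in _ *+ X](card_ord n.+1) -sumr_const ler_sum // => j _; apply: uN_ge.
Qed.

Lemma ucol_ge j : m%:R * q <= ucol j.
Proof.
by rewrite mulr_natl -[X in _ *+ X](card_ord m) -sumr_const ler_sum // => i _; apply: uN_ge.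
Qed.

Lemma uboundE : ubound = (1 / 4) / (n.+1%:R * q * (m%:R * q)).
Proof.
have -> : expR (4 * t) = expR (2 * t) ^+ 2 by rewrite expr2 -expRD; congr expR; ring.
rewrite /logistic_density natrM; field.
by rewrite !gt_eqF ?expR_gt0 ?ltr_wpDr ?expR_ge0 ?ltr0n.
Qed.

Lemma uratio_bound i j : 0 <= uratio i j <= ubound.
Proof.
have u_pos := uN_gt0 th i j.
have d_pos : 0 < urow i * ucol j by rewrite mulr_gt0 ?urow_gt0 ?ucol_gt0.
apply/andP; split; first exact: divr_ge0 (ltW u_pos) (ltW d_pos).
rewrite uboundE.
apply: ler_pM; [exact: ltW | by rewrite invr_ge0 ltW | exact: logistic_density_le |].
have q_gt0 : 0 < q := logistic_density_gt0 _.
have [n_pos m_pos] : 0 < n.+1%:R :> R /\ 0 < m%:R :> R by rewrite !ltr0n.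
have [nq_pos mq_pos] := (mulr_gt0 n_pos q_gt0, mulr_gt0 m_pos q_gt0).
rewrite lef_pV2 ?posrE ?(mulr_gt0 nq_pos mq_pos) //.
by apply: ler_pM; [exact: ltW | exact: ltW | exact: urow_ge | exact: ucol_ge].
Qed.

Lemma ubound_ge0 : 0 <= ubound.
Proof. by have /andP[r_ge0 r_le] := uratio_bound 0 0; apply: le_trans r_le. Qed.

Lemma normr_S_VS_defect_le k l : `|(matS th *m VS_defect) k l| <= 2 * ubound.
Proof.
(* The casts make the block indices live in 'I_n rather than 'I_n.+1.-1. *)
case: (split_ordP (k : 'I_(m + n))) => i ->; case: (split_ordP (l : 'I_(m + n))) => j ->.
- by rewrite S_VS_defect_ll normr_addr_le2 ?uratio_bound.
- by rewrite S_VS_defect_lr normr_subr_le2 ?uratio_bound.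
- by rewrite S_VS_defect_rl normr_subr_le2 ?uratio_bound.
- by rewrite S_VS_defect_rr normr0 mulr_ge0 ?ubound_ge0.
Qed.

End FisherBlocks.

Theorem lemma6 (R : realType) (m n : nat) (theta : 'cV[R]_(m + n.-1))
  (hm : (1 <= m)%N) (hmn : (m <= n)%N) :
  let V := fisherV theta in
  let S := matS theta in
  let Rm := invmx V - S in
  let U := Cov theta (fun X => Rm *m (@gvec R m n X - Exp theta (@gvec R m n))) in
  let t := maxnorm theta in
  maxnorm U <= maxnorm (invmx V - S)
    + 3 * (1 + expR (2 * t)) ^+ 4 / (4 * (m * n)%:R * expR (4 * t)).
Proof.
case: n theta hmn => [|n] theta hmn; first by move: (leq_trans hm hmn).
cbv zeta.
rewrite (Cov_mulmx_centered _ _ (@gvec R m n.+1)) Cov_gvec.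
rewrite mulmx_inv_sub_tr ?fisherV_unit ?fisherV_tr ?matS_tr //.
rewrite -[3 * _ / _]mulrA; apply: maxnorm_le => [|k l].
  exact: addr_ge0 (maxnorm_ge0 _) (mulr_ge0 (ler0n _ 3) (ubound_ge0 theta hm)).
rewrite [X in `|X|]mxE; apply: le_trans (ler_normD _ _) _; rewrite lerD ?le_maxnorm //.
apply: le_trans (normr_S_VS_defect_le theta hm k l) _.
by rewrite ler_wpM2r ?ler_nat ?(ubound_ge0 theta hm).
Qed.
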